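(* The module $\varphi(M_{s,\ell})$ is generated as an $\mathbb F_q[X]$-module by the $\ell+1$ polynomials $\bar P^{(t)}(X,Y)=\bar G(X)^{s-t}(Y-\bar R(X))^t$ for $0\le t<s$ and $\bar P^{(t)}(X,Y)=(L(X)Y)^{t-s}(Y-\bar R(X))^s$ for $s\le t\le\ell$.
   Context: Let $\mathbb F_q$ be a finite field, $1\le k<n<q$, $\alpha_0,\dots,\alpha_{n-1}$ distinct nonzero elements of $\mathbb F_q$, $w_0,\dots,w_{n-1}$ nonzero elements of $\mathbb F_q$, and $r\in\mathbb F_q^n$ a word with $r_i=0$ for $i=0,\dots,k-1$; let $r_i'=r_i/w_i$. Let $G(X)=\prod_{i=0}^{n-1}(X-\alpha_i)$, $R(X)$ the unique polynomial of degree $<n$ with $R(\alpha_i)=r_i'$, $L(X)=\prod_{i=0}^{k-1}(X-\alpha_i)$, $\bar G=G/L$ and $\bar R=R/L$ (both polynomials). For positive integers $s\le\ell$, $M_{s,\ell}$ is the $\mathbb F_q[X]$-module of all $Q\in\mathbb F_q[X,Y]$ of $Y$-degree at most $\ell$ such that for each $i$, $Q(X+\alpha_i,Y+r_i')$ has no monomials of total degree less than $s$. Define $\varphi(Q)(X,Y)=L(X)^{-s}Q(X,L(X)Y)$ for $Q\in M_{s,\ell}$ (this lies in $\mathbb F_q[X,Y]$), and let $\varphi(M_{s,\ell})$ be the image. *)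

From HB Require Import structures.
From mathcomp Require Import all_boot all_order all_algebra all_field.
Set Implicit Arguments. Unset Strict Implicit. Unset Printing Implicit Defensive.
Import GRing.Theory.
Local Open Scope ring_scope.

(* Bivariate polynomials over F are {poly {poly F}}: the outer variable is Y,
   the inner one is X, i.e. Q = \sum_j Q`_j(X) Y^j. *)

(* Q(X + a, Y + b) *)
Definition shiftXY (F : fieldType) (a b : F) (Q : {poly {poly F}}) : {poly {poly F}} :=
  (map_poly (fun p : {poly F} => p \Po ('X + a%:P)) Q) \Po ('X + (b%:P)%:P).

Definition no_low_monomials (F : fieldType) (s : nat) (Q : {poly {poly F}}) : Prop :=
  forall i j : nat, (i + j < s)%N -> (Q`_j)`_i = 0.

Definition in_M (F : fieldType) (n s l : nat) (alpha r' : 'I_n -> F)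
  (Q : {poly {poly F}}) : Prop :=
  (size Q <= l.+1)%N /\
  forall i : 'I_n, @no_low_monomials F s (shiftXY (alpha i) (r' i) Q).

Definition substLY (F : fieldType) (L : {poly F}) (Q : {poly {poly F}}) : {poly {poly F}} :=
  Q \Po (L%:P * 'X).

(* P \in phi(M_{s,l}) : P = L^{-s} Q(X, L Y) for some Q in M_{s,l} *)
Definition in_phiM (F : fieldType) (n s l : nat) (alpha r' : 'I_n -> F)
  (L : {poly F}) (P : {poly {poly F}}) : Prop :=
  exists Q, @in_M F n s l alpha r' Q /\ (L ^+ s)%:P * P = substLY L Q.

Definition Pbar (F : fieldType) (s : nat) (L Gb Rb : {poly F}) (t : nat) : {poly {poly F}} :=
  if (t < s)%N then (Gb ^+ (s - t))%:P * ('X - Rb%:P) ^+ t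
  else (L%:P * 'X) ^+ (t - s) * ('X - Rb%:P) ^+ s.

From HB Require Import structures.
From mathcomp Require Import all_boot all_order all_algebra all_field.
From mathcomp Require Import zify ring.
Set Implicit Arguments. Unset Strict Implicit. Unset Printing Implicit Defensive.
Import GRing.Theory.
Local Open Scope ring_scope.

(* Since R(alpha_i) = r'_i, the substitution Y |-> Y + R(X) moves every
   interpolation point to Y = 0.  So Q lies in M_{s,l} iff the coefficients of
   T(X, Y) = Q(X, Y + R) satisfy (X - alpha_i)^(s-t) | T_t for all i and t < s,
   i.e. G^(s-t) | T_t.  Splitting T = sum_(t<s) T_t Y^t + Y^s E(X, Y) writes
   Q = T(X, Y - R) as a combination of G^(s-t) (Y - R)^t and Y^j (Y - R)^s,
   and these generators clearly vanish to order s at every point.  Finally L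
   divides G and R (R vanishes at alpha_0, ..., alpha_(k-1)), so phi sends
   these generators to the \bar P^(t) times L^s, a non-zero divisor. *)

Local Notation nlm := no_low_monomials.

Section NoLowMonomials.
Variable F : fieldType.
Implicit Types (A B : {poly {poly F}}) (c : {poly F}).

Lemma nlmW a b A : (b <= a)%N -> nlm a A -> nlm b A.
Proof. by move=> le_ba hA i j lt_ij; apply: hA; lia. Qed.

Lemma nlmD a A B : nlm a A -> nlm a B -> nlm a (A + B).
Proof. by move=> hA hB i j lt_ij; rewrite !coefD hA ?hB ?addr0. Qed.

Lemma nlm_sum a (I : Type) (r : seq I) (P : pred I) (f : I -> {poly {poly F}}) :
  (forall i, P i -> nlm a (f i)) -> nlm a (\sum_(i <- r | P i) f i).
Proof.
move=> hf; apply: (big_ind (nlm a)) => //; last exact: nlmD.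
by move=> i j _; rewrite !coef0.
Qed.

Lemma nlmM a b A B : nlm a A -> nlm b B -> nlm (a + b) (A * B).
Proof.
move=> hA hB i j lt_ij.
rewrite coefM coef_sum big1 // => j1 _; rewrite coefM big1 // => i1 _.
have [lt_a|ge_a] := ltnP (i1 + j1) a; first by rewrite hA // mul0r.
rewrite hB ?mulr0 //; have := ltn_ord i1; have := ltn_ord j1; lia.
Qed.

Lemma nlmX a A m : nlm a A -> nlm (a * m) (A ^+ m).
Proof.
move=> hA; elim: m => [|m IHm]; first by rewrite muln0.
by rewrite exprS mulnS; apply: nlmM.
Qed.

Lemma nlmC m c : (forall i, (i < m)%N -> c`_i = 0) -> nlm m c%:P.
Proof.
move=> hc i j lt_ij; rewrite coefC; case: eqP => [j0|_]; last by rewrite coef0.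
by apply: hc; lia.
Qed.

Lemma nlm1_XaddC c : c`_0 = 0 -> nlm 1 ('X + c%:P).
Proof.
move=> hc i j lt_ij; have -> : i = 0%N by lia.
have -> : j = 0%N by lia.
by rewrite coefD coefX coefC add0r.
Qed.

Lemma nlm_comp s A B : nlm s A -> nlm 1 B -> nlm s (A \Po B).
Proof.
move=> hA hB; rewrite comp_polyE; apply: nlm_sum => i _; rewrite -mul_polyC.
apply: (@nlmW ((s - i) + 1 * i)); first lia.
apply: nlmM; last exact: nlmX.
by apply: nlmC => j lt_j; apply: hA; lia.
Qed.

End NoLowMonomials.

Section Shift.
Variables (F : fieldType) (a b : F).
Implicit Types (T B : {poly {poly F}}) (c : {poly F}).

HB.instance Definition _ := GRing.RMorphism.copy (@shiftXY F a b)
  (comp_poly ('X + (b%:P)%:P) \o map_poly (comp_poly ('X + a%:P))).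

Lemma shiftXY_C c : shiftXY a b c%:P = (c \Po ('X + a%:P))%:P.
Proof. by rewrite /shiftXY map_polyC comp_polyC. Qed.

Lemma shiftXY_comp T B :
  shiftXY a b (T \Po B) = map_poly (comp_poly ('X + a%:P)) T \Po shiftXY a b B.
Proof. by rewrite /shiftXY map_comp_poly -comp_polyA. Qed.

Lemma shiftXY_XsubC c :
  shiftXY a b ('X - c%:P) = 'X + (b%:P - (c \Po ('X + a%:P)))%:P.
Proof.
by rewrite rmorphB /= shiftXY_C /shiftXY map_polyX comp_polyX rmorphB addrA.
Qed.

Lemma nlm_shiftXY_XsubC c : c.[a] = b -> nlm 1 (shiftXY a b ('X - c%:P)).
Proof.
move=> ca; rewrite shiftXY_XsubC; apply: nlm1_XaddC.
by rewrite coefB coefC -horner_coef0 horner_comp !hornerE ca subrr.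
Qed.

Lemma nlm_shiftXY_C c : c.[a] = 0 -> nlm 1 (shiftXY a b c%:P).
Proof.
move=> ca; rewrite shiftXY_C; apply: nlmC => i; rewrite ltnS leqn0 => /eqP ->.
by rewrite -horner_coef0 horner_comp !hornerE ca.
Qed.

End Shift.

(* Q(X + a, Y + R(X + a)) is Q(X + a, Y + R(a)) composed with
   Y |-> Y + (R(X + a) - R(a)), a substitution without constant term. *)
Lemma nlm_recenter (F : fieldType) s a (R : {poly F}) Q :
  nlm s (shiftXY a R.[a] Q) ->
  nlm s (map_poly (comp_poly ('X + a%:P)) (Q \Po ('X + R%:P))).
Proof.
move=> hQ; set z := R.[a]%:P - (R \Po ('X + a%:P)).
have QE : Q = Q \Po ('X + R%:P) \Po ('X - R%:P) by rewrite comp_polyXaddC_K.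
have -> : map_poly (comp_poly ('X + a%:P)) (Q \Po ('X + R%:P)) =
          shiftXY a R.[a] Q \Po ('X + (- z)%:P).
  rewrite {2}QE shiftXY_comp shiftXY_XsubC -/z.
  by rewrite polyCN comp_polyXaddC_K.
apply: nlm_comp hQ _; apply: nlm1_XaddC.
by rewrite coefN /z coefB coefC -horner_coef0 horner_comp !hornerE subrr oppr0.
Qed.

Section Divisibility.
Variable F : fieldType.

Lemma dvdp_XsubC_exp_shift m a (p : {poly F}) :
  (forall i, (i < m)%N -> (p \Po ('X + a%:P))`_i = 0) -> ('X - a%:P) ^+ m %| p.
Proof.
move=> low0; set u := p \Po ('X + a%:P).
have u_drop : u = drop_poly m u * 'X^m.
  rewrite -{1}(poly_take_drop m u); suff -> : take_poly m u = 0 by rewrite add0r.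
  by apply/polyP => i; rewrite coef_take_poly coef0; case: ifP => // /low0.
rewrite -(comp_polyXaddC_K p a) -/u u_drop comp_polyM rmorphXn /= comp_polyX.
exact: dvdp_mull.
Qed.

Lemma dvdp_prod_XsubC_exp (I : finType) (P : pred I) (x : I -> F) m (p : {poly F}) :
  injective x -> (forall i, P i -> ('X - (x i)%:P) ^+ m %| p) ->
  \prod_(i | P i) ('X - (x i)%:P) ^+ m %| p.
Proof.
move=> x_inj dvd_p.
rewrite -big_enum -(big_map x xpredT (fun y => ('X - y%:P) ^+ m)).
have : uniq [seq x i | i <- enum P] by rewrite map_inj_uniq ?enum_uniq.
have : {subset [seq x i | i <- enum P] <= [seq x i | i <- enum P]} by [].
elim: {-2}[seq x i | i <- enum P] => [|y ys IHys] sub_ys /=.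
  by rewrite big_nil dvd1p.
case/andP=> y_ys uniq_ys; rewrite big_cons Gauss_dvdp.
- have /mapP[i] := sub_ys y (mem_head _ _); rewrite mem_enum => Pi ->.
  by rewrite dvd_p // IHys // => z ys_z; apply: sub_ys; rewrite inE ys_z orbT.
- apply: coprimep_expl; rewrite coprimep_sym coprimep_XsubC rootE horner_prod.
  rewrite prodf_seq_neq0; apply/allP => z ys_z /=.
  by rewrite !hornerE expf_neq0 // subr_eq0; apply: contraNneq y_ys => ->.
Qed.

End Divisibility.

Definition Pgen (F : fieldType) (s : nat) (G R : {poly F}) (t : nat) : {poly {poly F}} :=
  if (t < s)%N then (G ^+ (s - t))%:P * ('X - R%:P) ^+ t
  else 'X ^+ (t - s) * ('X - R%:P) ^+ s.

Section Generators.
Variables (F : fieldType) (s : nat).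
Implicit Types (G R L : {poly F}) (T : {poly {poly F}}).

Lemma size_Pgen G R t : (size (Pgen s G R t) <= t.+1)%N.
Proof.
rewrite /Pgen; case: ifP => lt_ts; apply: (leq_trans (size_polyMleq _ _)).
  have := size_polyC_leq1 (G ^+ (s - t)); rewrite size_exp_XsubC.
  by move: (size _) => x; lia.
by rewrite size_exp_XsubC size_polyXn; move/negbT: lt_ts; lia.
Qed.

Lemma nlm_shiftXY_Pgen a b G R t : R.[a] = b -> G.[a] = 0 ->
  nlm s (shiftXY a b (Pgen s G R t)).
Proof.
move=> Ra Ga; rewrite /Pgen; case: ifP => lt_ts; rewrite rmorphM !rmorphXn /=.
  apply: (@nlmW _ (1 * (s - t) + 1 * t)); first lia.
  by apply: nlmM; apply: nlmX; [exact: nlm_shiftXY_C | exact: nlm_shiftXY_XsubC].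
apply: (@nlmW _ (0 + 1 * s)); first lia.
by apply: nlmM => //; apply: nlmX; exact: nlm_shiftXY_XsubC.
Qed.

Lemma substLY_Pgen L Gb Rb t :
  substLY L (Pgen s (Gb * L) (Rb * L) t) = (L ^+ s)%:P * Pbar s L Gb Rb t.
Proof.
have eX : ('X - (Rb * L)%:P) \Po (L%:P * 'X) = L%:P * ('X - Rb%:P).
  by rewrite comp_polyB comp_polyX comp_polyC rmorphM /=; ring.
rewrite /substLY /Pgen /Pbar; case: ifP => lt_ts;
  rewrite comp_polyM ?comp_polyC !rmorphXn /= eX ?comp_polyX !exprMn; last by ring.
have LsE : L%:P ^+ s = L%:P ^+ (s - t) * L%:P ^+ t :> {poly {poly F}}.
  by rewrite -exprD subnK // ltnW.
by rewrite polyCM exprMn LsE; ring.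
Qed.

Lemma substLY_Pgen_sum L Gb Rb m (a : 'I_m -> {poly F}) :
  substLY L (\sum_(t < m) (a t)%:P * Pgen s (Gb * L) (Rb * L) t) =
  (L ^+ s)%:P * \sum_(t < m) (a t)%:P * Pbar s L Gb Rb t.
Proof.
rewrite mulr_sumr /substLY raddf_sum; apply: eq_bigr => t _ /=.
by rewrite comp_polyM comp_polyC -/(substLY L _) substLY_Pgen mulrCA.
Qed.

(* Expand T along the basis Y^t (t < s), Y^s Y^j, then substitute Y |-> Y - R. *)
Lemma comp_XsubC_Pgen_span l G R T : (s <= l)%N -> (size T <= l.+1)%N ->
  (forall t, (t < s)%N -> G ^+ (s - t) %| T`_t) ->
  exists a : 'I_l.+1 -> {poly F},
    T \Po ('X - R%:P) = \sum_(t < l.+1) (a t)%:P * Pgen s G R t.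
Proof.
move=> le_sl szT dvdT; set E := drop_poly s T \Po ('X - R%:P).
have szE : (size E <= l.+1 - s)%N.
  apply: (leq_trans (size_comp_poly_leq _ _)).
  rewrite size_XsubC muln1 size_drop_poly.
  by case: (size T - s)%N (leq_sub2r s szT) => [|j] /=; lia.
pose a t := if (t < s)%N then T`_t %/ G ^+ (s - t) else E`_(t - s).
exists (fun t : 'I_l.+1 => a t).
rewrite -(big_mkord xpredT (fun t => (a t)%:P * Pgen s G R t)).
rewrite (big_cat_nat _ (n := s)) //=; last exact: leqW.
rewrite -{1}(poly_take_drop s T) comp_polyD comp_polyM -/E rmorphXn /= comp_polyX.
congr (_ + _).
  rewrite /take_poly poly_def raddf_sum /= big_mkord; apply: eq_bigr => t _.
  rewrite comp_polyZ rmorphXn /= comp_polyX /a /Pgen ltn_ord -mul_polyC mulrA.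
  by rewrite -rmorphM /= divpK // dvdT.
rewrite -[X in \sum_(X <= _ < _) _]add0n big_addn big_mkord -[E in LHS](take_poly_id szE).
rewrite /take_poly poly_def mulr_suml; apply: eq_bigr => t _.
by rewrite /a /Pgen ltnNge leq_addl /= addnK -mul_polyC mulrA.
Qed.

End Generators.

Section SpanOfM.
Variables (F : fieldType) (n s l : nat) (alpha r' : 'I_n -> F) (R : {poly F}).
Hypothesis alpha_inj : injective alpha.
Hypothesis R_interp : forall i, R.[alpha i] = r' i.
Let G := \prod_(i < n) ('X - (alpha i)%:P).

Lemma in_M_coef_dvdp Q : @in_M F n s l alpha r' Q ->
  forall t, (t < s)%N -> G ^+ (s - t) %| (Q \Po ('X + R%:P))`_t.
Proof.
move=> [_ nlmQ] t lt_ts; rewrite /G -prodrXl.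
apply: dvdp_prod_XsubC_exp => // i _; apply: dvdp_XsubC_exp_shift => j lt_j.
have := nlmQ i; rewrite -R_interp => /nlm_recenter /(_ j t).
by rewrite coef_map /=; apply; lia.
Qed.

Lemma in_M_span : (s <= l)%N -> forall Q, @in_M F n s l alpha r' Q <->
  exists a : 'I_l.+1 -> {poly F}, Q = \sum_(t < l.+1) (a t)%:P * Pgen s G R t.
Proof.
move=> le_sl Q; split.
  move=> MQ; rewrite -[Q](comp_polyXaddC_K _ R).
  apply: comp_XsubC_Pgen_span (in_M_coef_dvdp MQ) => //.
  apply: (leq_trans (size_comp_poly_leq _ _)).
  by rewrite size_XaddC muln1; case: MQ; case: (size Q).
move=> [a ->]; split.
  apply: (big_ind (fun p : {poly {poly F}} => (size p <= l.+1)%N)).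
  - by rewrite size_poly0.
  - by move=> p q sz_p sz_q; rewrite (leq_trans (size_polyD _ _)) // geq_max sz_p.
  move=> t _; apply: (leq_trans (size_polyMleq _ _)).
  have := size_polyC_leq1 (a t); have := size_Pgen s G R t; have := ltn_ord t.
  by move: (size _) (size _) => x y; lia.
move=> i; rewrite rmorph_sum; apply: nlm_sum => t _.
rewrite rmorphM; apply: (@nlmW _ (0 + s)) => //; apply: nlmM => //.
apply: nlm_shiftXY_Pgen => //; rewrite /G horner_prod; apply/eqP/prodf_eq0.
by exists i => //; rewrite !hornerE subrr.
Qed.

End SpanOfM.

Theorem theorem5 (F : finFieldType) (n k : nat)
  (alpha w r : 'I_n -> F) (R : {poly F}) (s l : nat) :
  (1 <= k)%N -> (k < n)%N -> (n < #|F|)%N ->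
  injective alpha -> (forall i, alpha i != 0) ->
  (forall i, w i != 0) ->
  (forall i : 'I_n, (i < k)%N -> r i = 0) ->
  (size R <= n)%N -> (forall i, R.[alpha i] = r i / w i) ->
  (0 < s)%N -> (s <= l)%N ->
  let r' := fun i => r i / w i in
  let G := \prod_(i < n) ('X - (alpha i)%:P) in
  let L := \prod_(i < n | (i < k)%N) ('X - (alpha i)%:P) in
  let Gb := G %/ L in
  let Rb := R %/ L in
  forall P : {poly {poly F}},
    @in_phiM F n s l alpha r' L P <->
    exists a : 'I_l.+1 -> {poly F},
      P = \sum_(t < l.+1) (a t)%:P * @Pbar F s L Gb Rb t.
Proof.
move=> _ _ _ alpha_inj _ _ r_low _ R_interp _ le_sl r' G L Gb Rb P.
have L_neq0 : L != 0 by rewrite monic_neq0 // monic_prod_XsubC.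
have GbL : G = Gb * L.
  by rewrite /Gb /G (bigID (fun i : 'I_n => (i < k)%N)) /= -/L mulrC mulpK.
have RbL : R = Rb * L.
  rewrite /Rb divpK // /L -[X in X %| _](eq_bigr _ (fun i _ => expr1 _)).
  apply: dvdp_prod_XsubC_exp => // i lt_ik.
  by rewrite expr1 dvdp_XsubCl /root R_interp r_low // mul0r.
rewrite /in_phiM; split.
  move=> [Q [/(in_M_span alpha_inj R_interp le_sl) [a ->] LP]].
  exists a; apply: (@mulfI _ (L ^+ s)%:P); first by rewrite polyC_eq0 expf_neq0.
  by rewrite LP -/G GbL RbL substLY_Pgen_sum.
move=> [a ->]; exists (\sum_(t < l.+1) (a t)%:P * Pgen s G R t); split.
  by apply/(in_M_span alpha_inj R_interp le_sl); exists a.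
by rewrite GbL RbL substLY_Pgen_sum.
Qed.
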